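(* A language $L$ is regular if and only if there exists a constant-space verifier $V$ that never flips private coins, flips at most a constant number $r$ of public coins on every input (worst case, $r$ independent of the input), has no bound on its running time, and verifies $L$ with some error $\varepsilon<1/2$. In the class notation below: $\mathrm{IP}^{\mathrm{high}}(\mathrm{constant\ space},\ O(1)\ \mathrm{public\ random\ bits},\ \infty\ \mathrm{time})=\mathrm{REG}$.
   Context: Interactive proof systems. A verifier is a probabilistic Turing machine with a read-only input tape containing $\rhd w\lhd$ ($\rhd,\lhd$ end-markers; head starts on $\rhd$), a read-write work tape (initially blank), and a read-write communication cell shared with a prover (initially blank). Its finite state set has (not necessarily disjoint) subsets of private-coin-flipping states, public-coin-flipping states, and communication states (every public-coin state is a communication state), plus accept and reject states. In each step the verifier reads the input symbol, work-tape symbol and communication-cell symbol; if the state flips a private coin it obtains a fair random bit hidden from the prover; if it flips a public coin it obtains a fair random bit that is also revealed to the prover; the transition function then determines the new state, the symbol written on the work tape, the symbol written to the communication cell (if in a communication state), and moves of the input and work heads (left, right, stay). Each time the verifier writes to the communication cell, the prover overwrites it with a symbol that is an arbitrary (not necessarily computable) function of $w$, the history of public coin outcomes, and the communication symbols written so far; the prover does not see private coins, heads, work tape or state. The verifier halts on entering accept/reject; moving the input head beyond an end-marker (unless entering accept) or the work head off the left end means rejection; it may also run forever. $V$ verifies $L$ with error $\varepsilon=\max(\varepsilon^+,\varepsilon^-)$ where $\varepsilon^+,\varepsilon^-<1/2$ if (i) some prover makes $V$ halt and accept every $w\in L$ with probability at least $1-\varepsilon^+$, and (ii) for every prover and every $w\notin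 L$, $V$ halts and rejects with probability at least $1-\varepsilon^-$. A constant-space verifier uses $O(1)$ work-tape cells. $\mathrm{IP}^{\mathrm{high}}(\ldots)$ denotes the class of languages verifiable with some error $\varepsilon<1/2$ by verifiers obeying the listed resource bounds (given as worst-case functions of the input length $n$; a resource type not listed, here private coins, is unavailable; $\infty$ means unbounded). $\mathrm{REG}$ is the class of regular languages. *)

From Stdlib Require Import Reals.
From mathcomp Require Import all_boot.
Set Implicit Arguments. Unset Strict Implicit. Unset Printing Implicit Defensive.
Local Open Scope R_scope.

Inductive tsym (S : Type) := LEnd | Sym of S | REnd.
Arguments LEnd {S}. Arguments REnd {S}.

Inductive move := MoveL | Stay | MoveR.

(* A verifier over input alphabet Sigma.  Constant space: the work tape has
   the fixed number vk.+1 of cells (independent of the input). *)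
Record verifier (Sigma : finType) := Verifier {
  vQ : finType;
  vG : finType;
  vC : finType;
  vblankG : vG;
  vblankC : vC;
  vk : nat;
  vstart : vQ;
  vpriv : pred vQ;
  vpub : pred vQ;
  vcomm : pred vQ;
  vacc : pred vQ;
  vrej : pred vQ;
  vpub_comm : forall q, vpub q -> vcomm q;
  (* transition: state, input symbol, work symbol, comm symbol,
     private coin, public coin  |->
     new state, written work symbol, written comm symbol, input move, work move *)
  vdelta : vQ -> tsym Sigma -> vG -> vC -> bool -> bool ->
           vQ * vG * vC * move * move
}.

(* A prover: the symbol it writes is an arbitrary function of the input and
   of the transcript so far: the sequence of symbols written by the verifier,
   each paired with the public coin flipped at that step (if any). *)
Definition prover (Sigma : finType) (C : Type) :=
  seq Sigma -> seq (C * option bool) -> C.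

Record config (Sigma : finType) (V : verifier Sigma) := Config {
  cst : vQ V;
  cipos : nat;                             (* 0 = |>, |w|+1 = <| *)
  cwtape : {ffun 'I_(vk V).+1 -> vG V};
  cwpos : 'I_(vk V).+1;
  ccell : vC V;
  ctrans : seq (vC V * option bool);
  cnpriv : nat;
  cnpub : nat
}.

Inductive outcome (T : Type) := OAcc | ORej | ONext of T.
Arguments OAcc {T}. Arguments ORej {T}.

Definition tape_sym (S : Type) (w : seq S) (i : nat) : tsym S :=
  if i is j.+1 then
    (match ohead (drop j w) with Some x => Sym x | None => REnd end)
  else LEnd.

Definition move_in (S : Type) (w : seq S) (d : move) (i : nat) : option nat :=
  match d with
  | MoveL => if i is j.+1 then Some j else None
  | Stay => Some i
  | MoveR => if i == (size w).+1 then None else Some i.+1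
  end.

Definition move_work (k : nat) (d : move) (h : 'I_k.+1) : option 'I_k.+1 :=
  match d with
  | MoveL => if nat_of_ord h is j.+1 then Some (inord j) else None
  | Stay => Some h
  | MoveR => if nat_of_ord h == k then None else Some (inord h.+1)
  end.

Definition init_config (Sigma : finType) (V : verifier Sigma) : config V :=
  @Config Sigma V (vstart V) 0 [ffun => vblankG V] ord0 (vblankC V) [::] 0 0.

(* One step from a non-halting configuration c, with coin values bp (private)
   and bu (public); these are only meaningful when the state flips them. *)
Definition step (Sigma : finType) (V : verifier Sigma) (P : prover Sigma (vC V))
    (w : seq Sigma) (c : config V) (bp bu : bool) : outcome (config V) :=
  let q := cst c in
  let: (q', a, m, di, dw) :=
     vdelta q (tape_sym w (cipos c)) (cwtape c (cwpos c)) (ccell c) bp bu in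
  let tr' := if vcomm q then rcons (ctrans c) (m, if vpub q then Some bu else None)
             else ctrans c in
  let cc' := if vcomm q then P w tr' else ccell c in
  let tape' := [ffun j => if j == cwpos c then a else cwtape c j] in
  match move_work dw (cwpos c) with
  | None => ORej
  | Some h' =>
    if vacc q' then OAcc else
    match move_in w di (cipos c) with
    | None => ORej
    | Some i' =>
      ONext (@Config Sigma V q' i' tape' h' cc' tr'
               (cnpriv c + vpriv q)%N (cnpub c + vpub q)%N)
    end
  end.

Definition coin_avg (fp fu : bool) (g : bool -> bool -> R) : R :=
  match fp, fu with
  | true, true => ((g true true + g true false + g false true + g false false) / 4)
  | true, false => ((g true false + g false false) / 2)
  | false, true => ((g false true + g false false) / 2)
  | false, false => g false false
  end.

(* Probability of halting within n steps, weighted by va for accepting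
   and vr for rejecting halts. *)
Fixpoint within (Sigma : finType) (V : verifier Sigma) (P : prover Sigma (vC V))
    (w : seq Sigma) (va vr : R) (n : nat) (c : config V) : R :=
  match n with
  | 0 => 0
  | n'.+1 =>
    if vacc (cst c) then va else if vrej (cst c) then vr else
    coin_avg (vpriv (cst c)) (vpub (cst c))
      (fun bp bu => match step P w c bp bu with
                    | OAcc => va | ORej => vr
                    | ONext c' => within P w va vr n' c' end)
  end.

Definition accept_within Sigma V P w n := @within Sigma V P w 1 0 n (init_config V).
Definition reject_within Sigma V P w n := @within Sigma V P w 0 1 n (init_config V).

Definition sup_at_least (u : nat -> R) (p : R) : Prop :=
  forall d : R, (0 < d) -> exists n, (p - d <= u n).

Definition accept_prob_ge Sigma V (P : prover Sigma (vC V)) w p :=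
  sup_at_least (@accept_within Sigma V P w) p.
Definition reject_prob_ge Sigma V (P : prover Sigma (vC V)) w p :=
  sup_at_least (@reject_within Sigma V P w) p.

Definition verifies (Sigma : finType) (V : verifier Sigma)
    (L : seq Sigma -> Prop) (eps : R) : Prop :=
  (exists P : prover Sigma (vC V), forall w, L w -> accept_prob_ge P w (1 - eps)) /\
  (forall (P : prover Sigma (vC V)) w, ~ L w -> reject_prob_ge P w (1 - eps)).

(* Deterministic run for given coin streams (i-th private/public coin flip
   reads sp i / su i). *)
Fixpoint run (Sigma : finType) (V : verifier Sigma) (P : prover Sigma (vC V))
    (w : seq Sigma) (sp su : nat -> bool) (n : nat) : outcome (config V) :=
  match n with
  | 0 => ONext (init_config V)
  | n'.+1 =>
    match run P w sp su n' with
    | ONext c =>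
      if vacc (cst c) then OAcc else if vrej (cst c) then ORej else
      step P w c (vpriv (cst c) && sp (cnpriv c)) (vpub (cst c) && su (cnpub c))
    | o => o
    end
  end.

Definition no_private_coins (Sigma : finType) (V : verifier Sigma) : Prop :=
  forall q : vQ V, ~~ vpriv q.

Definition public_coins_bounded (Sigma : finType) (V : verifier Sigma) (r : nat) : Prop :=
  forall (P : prover Sigma (vC V)) w sp su n c,
    run P w sp su n = ONext c ->
    ~~ vacc (cst c) -> ~~ vrej (cst c) -> vpub (cst c) ->
    (cnpub c < r)%N.

Definition regular (Sigma : finType) (L : seq Sigma -> Prop) : Prop :=
  exists (Q : finType) (q0 : Q) (d : Q -> Sigma -> Q) (F : pred Q),
    forall w, L w <-> F (foldl d q0 w).

(* Without private coins the prover can recompute the verifier's configuration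
   from the transcript, so what it can force from a configuration depends only
   on the surface part (state, work tape, work head, communication cell) and
   the input head position.  With at most r public coins every acceptance
   probability is a multiple of 2^-r, so "the prover can force acceptance
   probability at least m / 2^r" is the least solution of a finite game
   recursion over surface configurations, input positions and levels
   m <= 2^r, and w is in L iff the initial position wins at some level above
   eps 2^r.  On an input u ++ z the winning positions on the border between u
   and z are the least solution of a recursion combining a map determined by u
   with a map determined by z; the map of u is a function between finite sets,
   so L has finitely many Myhill-Nerode classes.  Conversely a DFA is a
   verifier that ignores the prover. *)

From Stdlib Require Import Reals Lra ClassicalEpsilon Classical.
From mathcomp Require Import all_boot.
Set Implicit Arguments. Unset Strict Implicit. Unset Printing Implicit Defensive.
Local Open Scope R_scope.

Lemma coin_avg_le fp fu (g h : bool -> bool -> R) :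
  (forall b b', g b b' <= h b b') -> coin_avg fp fu g <= coin_avg fp fu h.
Proof.
move=> H; case: fp; case: fu => /=;
 have := H true true; have := H true false; have := H false true; have := H false false; lra.
Qed.

Lemma coin_avg_ge0 fp fu (g : bool -> bool -> R) :
  (forall b b', 0 <= g b b') -> 0 <= coin_avg fp fu g.
Proof.
move=> H; case: fp; case: fu => /=;
 have := H true true; have := H true false; have := H false true; have := H false false; lra.
Qed.

Section Within.
Variables (Sigma : finType) (V : verifier Sigma) (P : prover Sigma (vC V)) (w : seq Sigma).

Definition outcome_value va vr n (o : outcome (config V)) :=
  match o with OAcc => va | ORej => vr | ONext c' => within P w va vr n c' end.

Lemma withinS va vr n c : within P w va vr n.+1 c =
  if vacc (cst c) then va else if vrej (cst c) then vr else
  coin_avg (vpriv (cst c)) (vpub (cst c)) (fun bp bu => outcome_value va vr n (step P w c bp bu)).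
Proof. by []. Qed.

Lemma within_bounds n c : 0 <= within P w 1 0 n c /\ 0 <= within P w 0 1 n c /\
   within P w 1 0 n c + within P w 0 1 n c <= 1.
Proof.
elim: n c => [|n IH] c; first by rewrite /=; lra.
rewrite !withinS; case: (vacc _); first lra.
case: (vrej _); first lra.
have H o : 0 <= outcome_value 1 0 n o /\ 0 <= outcome_value 0 1 n o /\
           outcome_value 1 0 n o + outcome_value 0 1 n o <= 1.
  by case: o => [||c'] /=; [lra|lra|apply: IH].
case: (vpriv _); case: (vpub _) => /=;
have := H (step P w c true true); have := H (step P w c true false);
have := H (step P w c false true); have := H (step P w c false false); lra.
Qed.

Lemma within_ge0_leS va vr : 0 <= va -> 0 <= vr -> forall n c,
  0 <= within P w va vr n c /\ within P w va vr n c <= within P w va vr n.+1 c.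
Proof.
move=> ha hr; elim=> [|n IH] c.
  rewrite withinS /=; split; first lra.
  case: (vacc _) => //; case: (vrej _) => //.
  by apply: coin_avg_ge0 => b b'; case: (step _ _ _ _ _) => //= *; lra.
split.
  rewrite withinS; case: (vacc _) => //; case: (vrej _) => //.
  by apply: coin_avg_ge0 => b b'; case: (step _ _ _ _ _) => //= c'; case: (IH c').
rewrite (withinS _ _ n.+1) withinS; case: (vacc _); first lra.
case: (vrej _); first lra.
apply: coin_avg_le => b b'; case: (step _ _ _ _ _) => /= [||c']; try lra.
by case: (IH c').
Qed.

Lemma within_mono va vr : 0 <= va -> 0 <= vr -> forall n n' c, (n <= n')%N ->
  within P w va vr n c <= within P w va vr n' c.
Proof.
move=> ha hr n n' c /subnKC <-; elim: (n' - n)%N => [|k IH]; first by rewrite addn0; lra.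
rewrite addnS; apply: Rle_trans IH _.
by case: (within_ge0_leS ha hr (n + k) c).
Qed.

Lemma within_le1 n c : within P w 1 0 n c <= 1.
Proof. by have [_ [h0 h1]] := within_bounds n c; lra. Qed.

Lemma within_acc_rej_le1 n n' c : within P w 1 0 n c + within P w 0 1 n' c <= 1.
Proof.
have a1 := @within_mono 1 0 ltac:(lra) ltac:(lra) n (n + n') c (leq_addr _ _).
have a2 := @within_mono 0 1 ltac:(lra) ltac:(lra) n' (n + n') c (leq_addl _ _).
by have [_ [_ b3]] := within_bounds (n + n') c; lra.
Qed.

Lemma outcome_value_ge0 n o : 0 <= outcome_value 1 0 n o.
Proof. by case: o => [||c'] /=; [lra|lra|case: (within_bounds n c')]. Qed.

Lemma outcome_value_le1 n o : outcome_value 1 0 n o <= 1.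
Proof. by case: o => [||c'] /=; [lra|lra|apply: within_le1]. Qed.

Lemma outcome_value_mono n n' o : (n <= n')%N -> outcome_value 1 0 n o <= outcome_value 1 0 n' o.
Proof. by case: o => [||c'] /= h; [lra|lra|apply: within_mono => //; lra]. Qed.

End Within.

Section DFAVerifier.
Variables (Sigma Q : finType) (q0 : Q) (d : Q -> Sigma -> Q) (F : pred Q).

Definition dfa_delta (q : Q + bool) (s : tsym Sigma) (g cm : unit) (bp bu : bool)
  : (Q + bool) * unit * unit * move * move :=
  match q with
  | inl x => match s with
             | LEnd => (inl x, tt, tt, MoveR, Stay)
             | Sym a => (inl (d x a), tt, tt, MoveR, Stay)
             | REnd => (inr (F x), tt, tt, Stay, Stay)
             end
  | inr b => (inr b, tt, tt, Stay, Stay)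
  end.

Definition dfa_verifier : verifier Sigma :=
  @Verifier Sigma (Q + bool)%type unit unit tt tt 0 (inl q0)
    xpred0 xpred0 xpred0 (fun q => q == inr true) (fun q => q == inr false)
    (fun q h => h) dfa_delta.

Lemma dfa_verifier_within (P : prover Sigma (vC dfa_verifier)) w va vr :
  forall s p (c : config dfa_verifier),
  w = p ++ s -> cst c = inl (foldl d q0 p) -> cipos c = (size p).+1 ->
  forall n, (size s + 2 <= n)%N ->
  within P w va vr n c = if F (foldl d q0 w) then va else vr.
Proof.
elim=> [|a s IH] p c hw hc hi [|n] hn //.
- rewrite cats0 in hw; subst w.
  rewrite /= hc /step hc hi /= drop_size /=.
  by case: (F (foldl d q0 p)) => //=; case: n hn.
- rewrite /= hc /step hc hi /=.
  have -> : drop (size p) w = a :: s by rewrite hw drop_size_cat.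
  have hne : (size p).+1 == (size w).+1 = false.
    by rewrite hw size_cat /= eqSS -{1}(addn0 (size p)) eqn_add2l.
  rewrite /= hne /=.
  apply: (IH (rcons p a)).
  + by rewrite hw cat_rcons.
  + by rewrite /= foldl_rcons.
  + by rewrite /= size_rcons.
  + by move: hn; case: n.
Qed.

Lemma dfa_verifier_decides (P : prover Sigma (vC dfa_verifier)) w va vr :
  within P w va vr (size w + 3) (init_config dfa_verifier) = if F (foldl d q0 w) then va else vr.
Proof. by rewrite addnS /= /step /=; apply: (@dfa_verifier_within P w va vr w [::]). Qed.

End DFAVerifier.

Lemma regular_verifiable (Sigma : finType) (L : seq Sigma -> Prop) :
  regular L ->
  exists (V : verifier Sigma) (r : nat) (eps : R),
    no_private_coins V /\ public_coins_bounded V r /\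
    eps < 1 / 2 /\ verifies V L eps.
Proof.
case=> Q [q0 [d [F HL]]].
exists (dfa_verifier q0 d F), 0%N, 0.
split; first by [].
split; first by move=> P w sp su n c _ _ _ /=.
split; first lra.
split.
- exists (fun _ _ => tt) => w /HL Fw dl hd; exists (size w + 3)%N.
  rewrite /accept_within dfa_verifier_decides Fw; lra.
- move=> P w nL dl hd; exists (size w + 3)%N.
  rewrite /reject_within dfa_verifier_decides.
  have -> : F (foldl d q0 w) = false by apply/negP => /HL.
  lra.
Qed.

Definition classicb (P : Prop) : bool := if excluded_middle_informative P then true else false.

Lemma classicbE (P : Prop) : classicb P <-> P.
Proof. by rewrite /classicb; case: excluded_middle_informative. Qed.

Lemma myhill_nerode_regular (Sigma Q : finType) (L : seq Sigma -> Prop) (f : seq Sigma -> Q) :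
  (forall u v, f u = f v -> forall z, L (u ++ z) <-> L (v ++ z)) -> regular L.
Proof.
move=> hf.
pose rep (s : Q) : seq Sigma :=
  match excluded_middle_informative (exists u, f u == s) with
  | left H => xchoose H | right _ => [::] end.
have rep_f u : f (rep (f u)) = f u.
  rewrite /rep; case: excluded_middle_informative => [H|H]; first exact/eqP/(xchooseP H).
  by exfalso; apply: H; exists u.
pose d (s : Q) (a : Sigma) := f (rcons (rep s) a).
have run_rep p : exists p', foldl d (f [::]) p = f p' /\ forall z, L (p' ++ z) <-> L (p ++ z).
  elim/last_ind: p => [|p a [p' [e h]]]; first by exists [::].
  exists (rcons (rep (f p')) a); split; first by rewrite foldl_rcons e.
  by move=> z; rewrite !cat_rcons (hf _ _ (rep_f p')).
exists Q, (f [::]), d, (fun s => classicb (L (rep s))) => w.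
have [p' [-> h]] := run_rep w.
rewrite classicbE.
have := hf _ _ (rep_f p') [::]; have := h [::]; rewrite !cats0.
tauto.
Qed.

Section Game.
Variables (Sigma : finType) (V : verifier Sigma) (r : nat).

Definition sconf := (vQ V * {ffun 'I_(vk V).+1 -> vG V} * 'I_(vk V).+1 * vC V)%type.
Definition level := 'I_(2 ^ r).+1.
Definition sstate (k : sconf) : vQ V := k.1.1.1.

Local Notation spred := (sconf -> nat -> level -> Prop).

(* The private coin is fixed to [false]; the input head move is returned rather
   than performed, since the input position is not part of the surface. *)
Definition sstep (k : sconf) (s : tsym Sigma) (a : vC V) (b : bool) : outcome (sconf * move) :=
  let: (q, tp, h, cl) := k in
  let: (q', x, mm, di, dw) := vdelta q s (tp h) cl false b in
  match move_work dw h with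
  | None => ORej
  | Some h' => if vacc q' then OAcc else
      ONext ((q', [ffun j => if j == h then x else tp j], h', if vcomm q then a else cl), di)
  end.

Lemma sstep_silent (k : sconf) s a a' b : ~~ vcomm (sstate k) -> sstep k s a b = sstep k s a' b.
Proof.
case: k => [[[q tp] h] cl] /= hc; rewrite /sstep (negbTE hc).
by case: (vdelta _ _ _ _ _ _) => [[[[q' x] mm] di] dw].
Qed.

Lemma sstep_acc (k : sconf) s a a' b : sstep k s a b = OAcc -> sstep k s a' b = OAcc.
Proof.
case: k => [[[q tp] h] cl]; rewrite /sstep.
case: (vdelta _ _ _ _ _ _) => [[[[q' x] mm] di] dw].
by case: (move_work _ _) => // h'; case: (vacc q').
Qed.

(* The game is played on the input positions [ins] of a tape with symbols
   [sym] and head moves [mv]; [win k i m] says that the prover can force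
   acceptance with probability at least m / 2^r from surface [k] at position
   [i], where leaving [ins] at position [i] with level [m] is worth
   [exit_win k i m].  At a public coin the prover splits its target level
   between the two outcomes. *)
Section Rules.
Variables (sym : nat -> tsym Sigma) (mv : move -> nat -> option nat) (ins : pred nat)
  (exit_win : spred).

Definition move_wins (X : spred) k i a b (m : level) :=
  nat_of_ord m = 0%N \/ sstep k (sym i) a b = OAcc \/
  exists k' d i', sstep k (sym i) a b = ONext (k', d) /\ mv d i = Some i' /\ X k' i' m.

Definition turn_wins (X : spred) k i (m : level) :=
  if vpub (sstate k) then
    exists a0 a1 (m0 m1 : level), (2 * m <= m0 + m1)%N /\
      move_wins X k i a0 false m0 /\ move_wins X k i a1 true m1
  else exists a, move_wins X k i a false m.

Definition win_rule (X : spred) k i (m : level) :=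
  [\/ nat_of_ord m = 0%N, ~~ ins i /\ exit_win k i m |
      ins i /\ (vacc (sstate k) \/ ~~ vrej (sstate k) /\ turn_wins X k i m)].

Definition win k i m := forall X : spred, (forall k i m, win_rule X k i m -> X k i m) -> X k i m.

Lemma move_wins_mono (X Y : spred) k i a b m :
  (forall k i m, X k i m -> Y k i m) -> move_wins X k i a b m -> move_wins Y k i a b m.
Proof.
move=> XY [h|[h|[k' [d [i' [h1 [h2 h3]]]]]]]; [left|right; left|right; right] => //.
by exists k', d, i'; split; [|split; [|apply: XY]].
Qed.

Lemma win_level0 k i (m : level) : nat_of_ord m = 0%N -> win k i m.
Proof. by move=> m0 X HX; apply: HX; constructor 1. Qed.

End Rules.

Lemma turn_wins_map (sym1 sym2 : nat -> tsym Sigma) (mv1 mv2 : move -> nat -> option nat)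
    (X Y : spred) k i j m :
  (forall a b m', move_wins sym1 mv1 X k i a b m' -> move_wins sym2 mv2 Y k j a b m') ->
  turn_wins sym1 mv1 X k i m -> turn_wins sym2 mv2 Y k j m.
Proof.
move=> XY; rewrite /turn_wins; case: (vpub _).
- by move=> [a0 [a1 [m0 [m1 [le_m [h0 h1]]]]]]; exists a0, a1, m0, m1; split; [|split; apply: XY].
- by move=> [a h]; exists a; apply: XY.
Qed.

Section WinInduction.
Variables (sym : nat -> tsym Sigma) (mv : move -> nat -> option nat) (ins : pred nat)
  (exit_win : spred).

Lemma win_rule_mono (X Y : spred) k i m :
  (forall k i m, X k i m -> Y k i m) ->
  win_rule sym mv ins exit_win X k i m -> win_rule sym mv ins exit_win Y k i m.
Proof.
move=> XY [h|h|[hi [h|[hr h]]]];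
  [by constructor 1|by constructor 2|by constructor 3; split=> //; left|].
constructor 3; split=> //; right; split=> //.
by apply: turn_wins_map h => a b m'; apply: move_wins_mono.
Qed.

Local Notation win := (win sym mv ins exit_win).

Lemma win_fold k i m : win_rule sym mv ins exit_win win k i m -> win k i m.
Proof. by move=> h X HX; apply: (HX); apply: win_rule_mono h => k' i' m' /(_ X HX). Qed.

Lemma win_ind (X : spred) :
  (forall k i m,
     win_rule sym mv ins exit_win (fun k i m => win k i m /\ X k i m) k i m -> X k i m) ->
  forall k i m, win k i m -> X k i m.
Proof.
move=> HX k i m h.
suff [] : win k i m /\ X k i m by [].
apply: (h (fun k i m => win k i m /\ X k i m)) => k' i' m' h'; split; last exact: HX.
by apply: win_fold; apply: win_rule_mono h' => ? ? ? [].
Qed.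

End WinInduction.

Lemma win_rule_transfer (sym1 sym2 : nat -> tsym Sigma) (mv1 mv2 : move -> nat -> option nat)
    (ins1 ins2 : pred nat) (G1 G2 X Y : spred) k i j m :
  ins1 i -> ins2 j -> sym1 i = sym2 j ->
  (forall k' d i' m', mv1 d i = Some i' -> X k' i' m' ->
     exists j', mv2 d j = Some j' /\ Y k' j' m') ->
  win_rule sym1 mv1 ins1 G1 X k i m -> win_rule sym2 mv2 ins2 G2 Y k j m.
Proof.
move=> hi1 hi2 hs hmv [h|[/negP //]|[_ [h|[hr h]]]];
  [by constructor 1|by constructor 3; split=> //; left|].
constructor 3; split=> //; right; split=> //.
apply: turn_wins_map h => a b m' [h|[h|[k' [d [i' [h1 [h2 h3]]]]]]].
- by left.
- by right; left; rewrite -hs.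
- have [j' [hj1 hj2]] := hmv _ _ _ _ h2 h3.
  by right; right; exists k', d, j'; rewrite -hs.
Qed.

Lemma win_shift (sym1 sym2 : nat -> tsym Sigma) (mv1 mv2 : move -> nat -> option nat)
    (ins1 ins2 : pred nat) (G1 G2 : spred) (s : nat) :
  (forall i, ins2 i -> ins1 (i + s)%N) ->
  (forall i, ins2 i -> sym2 i = sym1 (i + s)%N) ->
  (forall d i i', ins2 i -> mv2 d i = Some i' -> mv1 d (i + s)%N = Some (i' + s)%N) ->
  (forall k i m, ~~ ins2 i -> G2 k i m -> win sym1 mv1 ins1 G1 k (i + s)%N m) ->
  forall k i m, win sym2 mv2 ins2 G2 k i m -> win sym1 mv1 ins1 G1 k (i + s)%N m.
Proof.
move=> hins hsym hmv hG.
apply: win_ind => k i m h.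
case: (h) => [h0|[h1 h2]|[h1 _]]; [exact: win_level0|exact: hG|].
apply: win_fold; apply: (@win_rule_transfer sym2 sym1 mv2 mv1 ins2 ins1 G2 G1 _ _ k i _ m
  h1 (hins _ h1) (hsym _ h1) _ h).
move=> k' d i' m' hm [_ hx]; exists (i' + s)%N; split=> //; exact: hmv.
Qed.

Lemma win_exit_mono (sym : nat -> tsym Sigma) (mv : move -> nat -> option nat) (ins : pred nat)
    (G1 G2 : spred) :
  (forall k i m, G1 k i m -> G2 k i m) ->
  forall k i m, win sym mv ins G1 k i m -> win sym mv ins G2 k i m.
Proof.
move=> hG k i m h; rewrite -[i]addn0.
apply: (win_shift (s := 0)) h => [i'|i'|d i1 i2|k1 i1 m1 hi hg]; rewrite ?addn0 //.
by apply: win_fold; constructor 2; split=> //; apply: hG.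
Qed.

Lemma tape_sym_cat_l (u z : seq Sigma) i : (i <= size u)%N -> tape_sym (u ++ z) i = tape_sym u i.
Proof.
case: i => [|j] //= hj; rewrite drop_cat hj.
case: (drop j u) (size_drop j u) => [|x s] //= h0.
by move: hj; rewrite -subn_gt0 -h0.
Qed.

Lemma tape_sym_cat_r (u z : seq Sigma) i :
  (0 < i)%N -> tape_sym (u ++ z) (i + size u) = tape_sym z i.
Proof. by case: i => [|j] //= _; rewrite drop_cat ltnNge leq_addl /= addnK. Qed.

Lemma move_in_cat_l (u z : seq Sigma) d i :
  (i <= size u)%N -> move_in (u ++ z) d i = move_in u d i.
Proof.
case: d => //= hi; rewrite size_cat.
have /negbTE -> : i != (size u + size z).+1.
  by rewrite neq_ltn ltnS (leq_trans hi (leq_addr _ _)).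
by have /negbTE -> : i != (size u).+1 by rewrite neq_ltn ltnS hi.
Qed.

Lemma move_in_cat_r (u z : seq Sigma) d i : (0 < i)%N ->
  move_in (u ++ z) d (i + size u) = omap (addn^~ (size u)) (move_in z d i).
Proof.
case: d => //=; first by case: i.
by move=> _; rewrite size_cat -addnS [(size u + _)%N]addnC eqn_add2r; case: (i == _).
Qed.

Lemma move_in_near (w : seq Sigma) d i i' :
  move_in w d i = Some i' -> (i' <= i.+1)%N /\ (i <= i'.+1)%N.
Proof.
case: d => /=.
- by case: i => [|j] // [<-]; rewrite leqW.
- by move=> [<-]; rewrite leqnSn.
- by case: (i == _) => // [[<-]]; rewrite leqnn leqW.
Qed.

Definition wins (w : seq Sigma) := win (tape_sym w) (move_in w) xpredT (fun _ _ _ => False).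

(* [wins_left u B] is the game on |> u, where stepping onto the first cell
   after u wins iff [B]; [wins_right z A] is the game on z <|, where stepping
   back onto position 0 (the last cell of u in u ++ z) wins iff [A]. *)
Definition wins_left (u : seq Sigma) (B : sconf -> level -> Prop) :=
  win (tape_sym u) (move_in u) (fun i => i <= size u)%N (fun k i m => i = (size u).+1 /\ B k m).
Definition wins_right (z : seq Sigma) (A : sconf -> level -> Prop) :=
  win (tape_sym z) (move_in z) (fun i => 0 < i)%N (fun k i m => i = 0%N /\ A k m).

Lemma wins_left_cat (u z : seq Sigma) (B : sconf -> level -> Prop) :
  (forall k m, B k m -> wins (u ++ z) k (size u).+1 m) ->
  forall k i m, wins_left u B k i m -> wins (u ++ z) k i m.
Proof.
move=> hB k i m h; rewrite -[i]addn0.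
apply: (win_shift (s := 0)) h => [i' _|i' hi'|d i1 i2 hi1|k1 i1 m1 _ [-> hb]]; rewrite ?addn0 //.
- by rewrite tape_sym_cat_l.
- by rewrite move_in_cat_l.
- exact: hB.
Qed.

Lemma wins_right_cat (u z : seq Sigma) (A : sconf -> level -> Prop) :
  (forall k m, A k m -> wins (u ++ z) k (size u) m) ->
  forall k i m, wins_right z A k i m -> wins (u ++ z) k (i + size u) m.
Proof.
move=> hA; apply: win_shift => [//|i' hi'|d i1 i2 hi1 hm|k1 i1 m1 _ [-> ha]].
- by rewrite tape_sym_cat_r.
- by rewrite move_in_cat_r // hm.
- by rewrite add0n; apply: hA.
Qed.

Section Split.
Variables (u z : seq Sigma) (A B : sconf -> level -> Prop).
Hypothesis border_A : forall k m,
  wins (u ++ z) k (size u) m -> wins_left u B k (size u) m -> A k m.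
Hypothesis border_B : forall k m,
  wins (u ++ z) k (size u).+1 m -> wins_right z A k 1 m -> B k m.

Definition split_wins k i m :=
  ((i <= size u)%N -> wins_left u B k i m) /\
  ((size u < i)%N -> wins_right z A k (i - size u) m).

Local Notation wins_cat_rule :=
  (win_rule (tape_sym (u ++ z)) (move_in (u ++ z)) xpredT (fun _ _ _ => False)
     (fun k i m => wins (u ++ z) k i m /\ split_wins k i m)).

Lemma split_wins_left k i m : (i <= size u)%N -> wins_cat_rule k i m -> wins_left u B k i m.
Proof.
move=> hi h; apply: win_fold.
apply: (@win_rule_transfer _ _ _ _ _ _ _ _ _ _ k i i m _ hi (tape_sym_cat_l z hi) _ h) => //.
move=> k' d i' m' hm [win' [hl hr]].
exists i'; split; first by rewrite -(move_in_cat_l z).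
case: (leqP i' (size u)) => hi'; first exact: hl.
have ei : i' = (size u).+1.
  by apply/eqP; rewrite eqn_leq hi' (leq_trans (move_in_near hm).1).
apply: win_fold; constructor 2; split; first by rewrite -ltnNge.
split=> //; apply: border_B; first by rewrite -ei.
by have := hr hi'; rewrite ei subSn // subnn.
Qed.

Lemma split_wins_right k i m :
  (size u < i)%N -> wins_cat_rule k i m -> wins_right z A k (i - size u) m.
Proof.
move=> hi h.
have hj : (0 < i - size u)%N by rewrite subn_gt0.
have ei : i = (i - size u + size u)%N by rewrite subnK // ltnW.
apply: win_fold.
apply: (@win_rule_transfer _ _ _ _ _ _ _ _ _ _ k i (i - size u) m _ hj _ _ h) => //.
  by rewrite {1}ei tape_sym_cat_r.
move=> k' d i' m' + [win' [hl hr]].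
rewrite {1}ei move_in_cat_r //.
case hz: (move_in z d (i - size u)) => [j|] //= [ej].
exists j; split=> //.
case: (posnP j) => hj0.
- have e : i' = size u by rewrite -ej hj0.
  apply: win_fold; constructor 2; split; first by rewrite hj0.
  by split=> //; apply: border_A; rewrite -e //; apply: hl; rewrite e.
- have := hr; rewrite -ej addnK; apply.
  by rewrite -{1}(add0n (size u)) ltn_add2r.
Qed.

Lemma wins_cat_split k i m : wins (u ++ z) k i m -> split_wins k i m.
Proof.
apply: win_ind => k' i' m' h.
by split=> hi; [apply: split_wins_left | apply: split_wins_right].
Qed.

End Split.

Definition border_l u z k m := wins (u ++ z) k (size u) m.
Definition border_r u z k m := wins (u ++ z) k (size u).+1 m.

Lemma wins_split_border u z k i m : wins (u ++ z) k i m ->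
  split_wins u z (border_l u z) (border_r u z) k i m.
Proof. by apply: wins_cat_split => k' m' h _. Qed.

Lemma border_l_wins_left u z k m :
  border_l u z k m <-> wins_left u (border_r u z) k (size u) m.
Proof.
split; last exact: wins_left_cat.
by move/wins_split_border => [+ _]; apply.
Qed.

Lemma border_r_wins_right u z k m :
  border_r u z k m <-> wins_right z (border_l u z) k 1 m.
Proof.
split; first by move/wins_split_border => [_ +]; rewrite subSn // subnn; apply.
by move/(wins_right_cat (fun k m h => h)); rewrite add1n.
Qed.

Lemma wins_start_left u z k m : wins (u ++ z) k 0 m <-> wins_left u (border_r u z) k 0 m.
Proof.
split; last exact: wins_left_cat.
by move/wins_split_border => [+ _]; apply.
Qed.

Lemma border_r_least u z (A B : sconf -> level -> Prop) :
  (forall k m, wins_left u B k (size u) m -> A k m) ->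
  (forall k m, wins_right z A k 1 m -> B k m) ->
  forall k m, border_r u z k m -> B k m.
Proof.
move=> hA hB k m /(wins_cat_split (fun k m _ => hA k m) (fun k m _ => hB k m)) [_].
by rewrite subSn // subnn => /(_ (ltnSn _)); apply: hB.
Qed.

Lemma wins_start_congr u v :
  (forall B k m, wins_left u B k (size u) m <-> wins_left v B k (size v) m) ->
  (forall B k m, wins_left u B k 0 m <-> wins_left v B k 0 m) ->
  forall z k m, wins (u ++ z) k 0 m <-> wins (v ++ z) k 0 m.
Proof.
move=> h1 h0 z.
have border_r_sub u' v' :
    (forall B k m, wins_left u' B k (size u') m -> wins_left v' B k (size v') m) ->
    forall k m, border_r u' z k m -> border_r v' z k m.
  move=> h; apply: (border_r_least (A := border_l v' z)) => k m.
  - by move/h => ?; apply/border_l_wins_left.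
  - by move=> ?; apply/border_r_wins_right.
have eB k m : border_r u z k m <-> border_r v z k m.
  by split; apply: border_r_sub => B k' m'; rewrite h1.
move=> k m; rewrite wins_start_left wins_start_left h0.
by split; apply: win_exit_mono => k' i' m' [-> hb]; split=> //; apply/eB.
Qed.

Definition summary (u : seq Sigma) :
    {ffun {set sconf * level} -> {set sconf * level} * {set sconf * level}} :=
  [ffun S : {set sconf * level} =>
     ([set x | classicb (wins_left u (fun k m => (k, m) \in S) x.1 (size u) x.2)],
      [set x | classicb (wins_left u (fun k m => (k, m) \in S) x.1 0 x.2)])].

Lemma wins_left_set u (B : sconf -> level -> Prop) k i m :
  wins_left u B k i m <->
  wins_left u (fun k m => (k, m) \in [set x : sconf * level | classicb (B x.1 x.2)]) k i m.
Proof.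
by split; apply: win_exit_mono => k' i' m' [-> h]; split=> //; move: h; rewrite inE classicbE.
Qed.

Lemma summary_wins_left u v : summary u = summary v ->
  (forall B k m, wins_left u B k (size u) m <-> wins_left v B k (size v) m) /\
  (forall B k m, wins_left u B k 0 m <-> wins_left v B k 0 m).
Proof.
move=> /ffunP e; split=> B k m; rewrite wins_left_set [X in _ <-> X]wins_left_set;
  move: (e [set x : sconf * level | classicb (B x.1 x.2)]); rewrite !ffunE => -[+ +].
all: [> move=> /setP /(_ (k, m)) + _ | move=> _ /setP /(_ (k, m))]; rewrite !inE /= => h.
all: by split=> H; apply/classicbE; [rewrite -h | rewrite h]; apply/classicbE.
Qed.

End Game.

Section ProperPrefix.
Variable T : eqType.
Implicit Types (s t : seq T) (x y : T).

Definition proper_prefix t s := prefix t s && (size t < size s)%N.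

Lemma proper_prefixW t s : proper_prefix t s -> prefix t s.
Proof. by case/andP. Qed.

Lemma proper_prefix_irr t : ~~ proper_prefix t t.
Proof. by rewrite /proper_prefix ltnn andbF. Qed.

Lemma prefix_rcons_proper t x s : prefix (rcons t x) s -> proper_prefix t s.
Proof.
move=> h; have := size_prefix h; rewrite size_rcons => lt_ts.
by rewrite /proper_prefix lt_ts andbT; apply: (catl_prefix (s3 := [:: x])); rewrite cats1.
Qed.

Lemma prefix_rcons_inj t x y s : prefix (rcons t x) s -> prefix (rcons t y) s -> x = y.
Proof.
rewrite !prefixE !size_rcons => /eqP -> /eqP /rcons_inj.
by case.
Qed.

End ProperPrefix.

Lemma INR_expn2 n : INR (2 ^ n)%N = 2 ^ n.
Proof. by elim: n => [|n IH] //; rewrite expnS mult_INR IH. Qed.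

Definition level_prob (r m : nat) : R := INR m / 2 ^ r.

Section Levels.
Variable r : nat.

Lemma pow2_gt0 : 0 < 2 ^ r.
Proof. by apply: pow_lt; lra. Qed.

Lemma level_prob_ge0 m : 0 <= level_prob r m.
Proof. by apply: Rmult_le_pos; [apply: pos_INR|apply/Rlt_le/Rinv_0_lt_compat/pow2_gt0]. Qed.

Lemma level_prob_le1 (m : level r) : level_prob r m <= 1.
Proof.
have p_gt0 := pow2_gt0.
have le_m : INR m <= 2 ^ r by rewrite -INR_expn2; apply/le_INR/leP; rewrite -ltnS.
rewrite /level_prob -(Rinv_r (2 ^ r)); last lra.
by apply: Rmult_le_compat_r => //; apply/Rlt_le/Rinv_0_lt_compat.
Qed.

Lemma level_prob_eq0 m : level_prob r m = 0 <-> m = 0%N.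
Proof.
rewrite /level_prob; split=> [h|->]; last by rewrite /Rdiv Rmult_0_l.
case: (Rmult_integral _ _ h) => [/(INR_eq _ 0) //|].
by move=> /(Rinv_neq_0_compat (2 ^ r)) []; have := pow2_gt0; lra.
Qed.

Lemma level_prob_le_avg (m m0 m1 : nat) :
  (2 * m <= m0 + m1)%N <-> level_prob r m <= (level_prob r m0 + level_prob r m1) / 2.
Proof.
have p_gt0 := pow2_gt0.
have e : (level_prob r m0 + level_prob r m1) / 2 - level_prob r m =
         (INR (m0 + m1) - INR (2 * m)) * / (2 * 2 ^ r).
  by rewrite /level_prob plus_INR mult_INR /=; field; lra.
have ip : 0 < / (2 * 2 ^ r) by apply: Rinv_0_lt_compat; lra.
split=> [/leP/le_INR h|h]; first by nra.
by apply/leP/INR_le; nra.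
Qed.

Lemma level_prob_onto (x : R) (n : nat) :
  x <= 1 -> x * 2 ^ r = INR n -> exists m : level r, level_prob r m = x.
Proof.
move=> le_x1 e; have p_gt0 := pow2_gt0.
have lt_n : (n < (2 ^ r).+1)%N.
  by rewrite ltnS; apply/leP/INR_le; rewrite INR_expn2 -e; nra.
exists (Ordinal lt_n); rewrite /level_prob /= -e /Rdiv Rmult_assoc Rinv_r; lra.
Qed.

End Levels.

Section Prover.
Variables (Sigma : finType) (V : verifier Sigma) (w : seq Sigma).
Hypothesis nopriv : no_private_coins V.
Implicit Types (P : prover Sigma (vC V)) (c : config V).

Definition surface c : sconf V := (cst c, cwtape c, cwpos c, ccell c).

Definition trans_next c (b : bool) :=
  let: (q', x, mm, di, dw) :=
    vdelta (cst c) (tape_sym w (cipos c)) (cwtape c (cwpos c)) (ccell c) false b in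
  if vcomm (cst c) then rcons (ctrans c) (mm, if vpub (cst c) then Some b else None)
  else ctrans c.

Definition mkconfig (k : sconf V) i tr np nu : config V :=
  @Config Sigma V k.1.1.1 i k.1.1.2 k.1.2 k.2 tr np nu.

Lemma surface_mkconfig k i tr np nu : surface (mkconfig k i tr np nu) = k.
Proof. by case: k => [[[q tp] h] cl]. Qed.

Lemma step_sstep P c b : step P w c false b =
  match sstep (surface c) (tape_sym w (cipos c)) (P w (trans_next c b)) b with
  | OAcc => OAcc | ORej => ORej
  | ONext (k', d) =>
      match move_in w d (cipos c) with
      | None => ORej
      | Some i' => ONext (mkconfig k' i' (trans_next c b)
                            (cnpriv c + vpriv (cst c)) (cnpub c + vpub (cst c)))
      end
  end.
Proof.
rewrite /step /sstep /surface /trans_next /=.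
case: (vdelta _ _ _ _ _ _) => [[[[q' x] mm] di] dw] /=.
by case: (move_work _ _) => //= h'; case: (vacc q').
Qed.

Lemma trans_next_cases c b : (~~ vcomm (cst c) /\ trans_next c b = ctrans c) \/
  (vcomm (cst c) /\
   exists x, trans_next c b = rcons (ctrans c) x /\ (vpub (cst c) -> x.2 = Some b)).
Proof.
rewrite /trans_next; case: (vdelta _ _ _ _ _ _) => [[[[q' x] mm] di] dw].
case hc: (vcomm (cst c)); [right|by left].
by split=> //; exists (mm, if vpub (cst c) then Some b else None); split=> //= ->.
Qed.

(* The transcripts on which the prover can still be queried once the coin
   flipped at [c] came up [b]. *)
Definition subtree c b s :=
  if vcomm (cst c) then prefix (trans_next c b) s else proper_prefix (ctrans c) s.

Lemma subtree_proper c b s : subtree c b s -> proper_prefix (ctrans c) s.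
Proof.
rewrite /subtree; case: (trans_next_cases c b) => [[/negbTE -> //]|[-> [x [-> _]]]].
exact: prefix_rcons_proper.
Qed.

Lemma subtree_next c b s : proper_prefix (trans_next c b) s -> subtree c b s.
Proof.
rewrite /subtree; case: (trans_next_cases c b) => [[/negbTE -> -> //]|[-> _]].
exact: proper_prefixW.
Qed.

Lemma subtree_disjoint c s :
  vpub (cst c) -> prefix (trans_next c false) s -> ~~ subtree c true s.
Proof.
move=> hp; rewrite /subtree (vpub_comm hp).
case: (trans_next_cases c false) => [[/negP[]]|[_ [x0 [-> h0]]]]; first exact: vpub_comm.
case: (trans_next_cases c true) => [[/negP[]]|[_ [x1 [-> h1]]]]; first exact: vpub_comm.
move=> s0; apply/negP => /(prefix_rcons_inj s0) e.
by have := h1 hp; rewrite -e h0.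
Qed.

Lemma step_prover_local P P' c b :
  (vcomm (cst c) -> P w (trans_next c b) = P' w (trans_next c b)) ->
  step P w c false b = step P' w c false b.
Proof.
move=> h; rewrite !step_sstep.
case hc: (vcomm (cst c)); first by rewrite h.
by rewrite (@sstep_silent _ _ _ _ (P w (trans_next c b)) (P' w (trans_next c b))) //= hc.
Qed.

Lemma step_next_inv P c b c' : step P w c false b = ONext c' ->
  exists k' d i',
    [/\ sstep (surface c) (tape_sym w (cipos c)) (P w (trans_next c b)) b = ONext (k', d),
        move_in w d (cipos c) = Some i' &
        c' = mkconfig k' i' (trans_next c b) (cnpriv c + vpriv (cst c)) (cnpub c + vpub (cst c))].
Proof.
rewrite step_sstep; case: (sstep _ _ _ _) => [||[k' d]] //=.
by case E: (move_in w d (cipos c)) => [i'|] // [<-]; exists k', d, i'.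
Qed.

Lemma step_acc_inv P c b : step P w c false b = OAcc ->
  forall a, sstep (surface c) (tape_sym w (cipos c)) a b = OAcc.
Proof.
rewrite step_sstep; case E: (sstep _ _ _ _) => [||[k' d]] //.
  by move=> _ a; apply: sstep_acc E.
by case: (move_in w d (cipos c)).
Qed.

Lemma within_public P va vr n c : within P w va vr n.+1 c =
  if vacc (cst c) then va else if vrej (cst c) then vr else
  if vpub (cst c) then
    (outcome_value P w va vr n (step P w c false true) +
     outcome_value P w va vr n (step P w c false false)) / 2
  else outcome_value P w va vr n (step P w c false false).
Proof. by rewrite withinS (negbTE (nopriv _)); case: (vpub _). Qed.

Lemma outcome_value_prover_local va vr n : forall P P' c b,
  (forall s, subtree c b s -> P w s = P' w s) ->
  outcome_value P w va vr n (step P w c false b) = outcome_value P' w va vr n (step P' w c false b).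
Proof.
elim: n => [|n IH] P P' c b h.
all: rewrite (@step_prover_local P P') => [|hc]; last by apply: h; rewrite /subtree hc prefix_refl.
  by case: (step P' w c false b).
case E: (step P' w c false b) => [||c'] //.
have h' b' s : subtree c' b' s -> P w s = P' w s.
  have [k' [d [i' [_ _ ->]]]] := step_next_inv E.
  by move/subtree_proper/subtree_next; apply: h.
change (within P w va vr n.+1 c' = within P' w va vr n.+1 c').
by rewrite !within_public !(IH P P' c') //; apply: h'.
Qed.

Variable r : nat.

(* [P] may differ from [P0] only on transcripts that the verifier can still
   produce from [c]; this is what lets the strategies for the two outcomes of a
   public coin be merged into one prover. *)
Definition achieves c (m : level r) P0 := exists P n,
  (forall s, ~~ proper_prefix (ctrans c) s -> P w s = P0 w s) /\
  level_prob r m <= within P w 1 0 n c.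

Definition achievable (k : sconf V) (i : nat) (m : level r) :=
  forall c, surface c = k -> cipos c = i -> forall P0, achieves c m P0.

Definition achieves_branch c b (mb : level r) := forall Pin, exists Pout nb,
  (forall s, ~~ subtree c b s -> Pout w s = Pin w s) /\
  level_prob r mb <= outcome_value Pout w 1 0 nb (step Pout w c false b).

Lemma achievable_move (X : sconf V -> nat -> level r -> Prop) c a b mb :
  (forall k i m, X k i m -> achievable k i m) ->
  move_wins (tape_sym w) (move_in w) X (surface c) (cipos c) a b mb -> achieves_branch c b mb.
Proof.
move=> hX [h0|[hacc|[k' [d [i' [hl [hm hx]]]]]]] Pin.
- by exists Pin, 0%N; split=> //; rewrite (proj2 (level_prob_eq0 _ _) h0); apply: outcome_value_ge0.
- exists Pin, 0%N; split=> //.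
  by rewrite step_sstep (sstep_acc _ hacc) /=; apply: level_prob_le1.
pose P1 : prover Sigma (vC V) :=
  fun w' s => if vcomm (cst c) && (s == trans_next c b) then a else Pin w' s.
pose c' := mkconfig k' i' (trans_next c b) (cnpriv c + vpriv (cst c)) (cnpub c + vpub (cst c)).
have [P [n [hag hsc]]] := hX _ _ _ hx c' (surface_mkconfig _ _ _ _ _) erefl P1.
have hstep : step P w c false b = ONext c'.
  rewrite (@step_prover_local P P1) => [|_]; last by apply: hag; apply: proper_prefix_irr.
  rewrite step_sstep.
  have -> : sstep (surface c) (tape_sym w (cipos c)) (P1 w (trans_next c b)) b = ONext (k', d).
    rewrite /P1; case hc: (vcomm (cst c)); first by rewrite eqxx.
    by rewrite -hl; apply: sstep_silent; rewrite /= hc.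
  by rewrite hm.
exists P, n; split; last by rewrite hstep.
move=> s hs; rewrite hag; last by apply: contra hs; apply: subtree_next.
rewrite /P1; case hc: (vcomm (cst c)) => //=.
by case: eqP hs => // ->; rewrite /subtree hc prefix_refl.
Qed.

Lemma achieves_silent c (m : level r) P0 :
  ~~ vacc (cst c) -> ~~ vrej (cst c) -> ~~ vpub (cst c) ->
  achieves_branch c false m -> achieves c m P0.
Proof.
move=> ha hr hp /(_ P0) [P [n [hag hsc]]]; exists P, n.+1; split.
  by move=> s hs; apply: hag; apply: contra hs; apply: subtree_proper.
by rewrite within_public (negbTE ha) (negbTE hr) (negbTE hp).
Qed.

Lemma achieves_coin c (m m0 m1 : level r) P0 :
  ~~ vacc (cst c) -> ~~ vrej (cst c) -> vpub (cst c) -> (2 * m <= m0 + m1)%N ->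
  achieves_branch c false m0 -> achieves_branch c true m1 -> achieves c m P0.
Proof.
move=> ha hr hp /(level_prob_le_avg r) le_m br0 br1.
have [PA [n0 [hagA hscA]]] := br0 P0.
have [PB [n1 [hagB hscB]]] := br1 PA.
exists PB, (n0 + n1).+1; split.
  move=> s hs; rewrite hagB; last by apply: contra hs; apply: subtree_proper.
  by apply: hagA; apply: contra hs; apply: subtree_proper.
rewrite within_public (negbTE ha) (negbTE hr) hp.
have e1 : level_prob r m1 <= outcome_value PB w 1 0 (n0 + n1) (step PB w c false true).
  by apply: Rle_trans hscB _; apply: outcome_value_mono; apply: leq_addl.
have e0 : level_prob r m0 <= outcome_value PB w 1 0 (n0 + n1) (step PB w c false false).
  rewrite (@outcome_value_prover_local _ _ _ PB PA) => [|s hs]; last first.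
    by apply: hagB; apply: subtree_disjoint => //; move: hs; rewrite /subtree (vpub_comm hp).
  by apply: Rle_trans hscA _; apply: outcome_value_mono; apply: leq_addr.
lra.
Qed.

Lemma win_achievable k i (m : level r) : wins w k i m -> achievable k i m.
Proof.
have hX k' i' m' : wins w k' i' m' /\ achievable k' i' m' -> achievable k' i' m' by case.
apply: win_ind => {}k {}i {}m [h0|[_ []]|[_ h]] c hk hi P0; subst k i.
  by exists P0, 0%N; split=> //=; rewrite (proj2 (level_prob_eq0 _ _) h0); lra.
case ha: (vacc (cst c)).
  by exists P0, 1%N; split=> //; rewrite within_public ha; apply: level_prob_le1.
case: h => [/=|[hr]]; first by rewrite ha.
rewrite /turn_wins /=; case hp: (vpub (cst c)).
- move=> [a0 [a1 [m0 [m1 [le_m [h0 h1]]]]]].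
  apply: (achieves_coin P0 (negbT ha) hr hp le_m).
  + exact: achievable_move hX h0.
  + exact: achievable_move hX h1.
- by move=> [a h]; apply: (achieves_silent P0 (negbT ha) hr (negbT hp) (achievable_move hX h)).
Qed.

Lemma wins_accept_within (m : level r) :
  wins w (surface (init_config V)) 0 m -> exists P n, level_prob r m <= accept_within P w n.
Proof.
move=> /win_achievable /(_ (init_config V) erefl erefl (fun _ _ => vblankC V)) [P [n [_ h]]].
by exists P, n.
Qed.

Hypothesis hbound : public_coins_bounded V r.

Definition reachable P c := exists sp su n, run P w sp su n = ONext c.

Lemma step_cnpub P c b c' : step P w c false b = ONext c' ->
  cnpub c' = (cnpub c + vpub (cst c))%N.
Proof. by move=> /step_next_inv [k' [d [i' [_ _ ->]]]]. Qed.

Lemma run_agree P sp su su' n : forall c,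
  run P w sp su n = ONext c -> (forall j, (j < cnpub c)%N -> su' j = su j) ->
  run P w sp su' n = ONext c.
Proof.
elim: n => [|n IH] c //=.
case E: (run P w sp su n) => [||c0] //.
case ha: (vacc (cst c0)) => //; case hr: (vrej (cst c0)) => //.
rewrite (negbTE (nopriv _)) /= => hs hag.
have ec := step_cnpub hs.
rewrite (IH c0 E); last by move=> j hj; apply: hag; rewrite ec (leq_trans hj (leq_addr _ _)).
rewrite ha hr (negbTE (nopriv _)) /=.
case hp: (vpub (cst c0)) hs => /= hs //.
by rewrite hag // ec hp addn1.
Qed.

Lemma reachable_step P c (b : bool) c' : reachable P c -> ~~ vacc (cst c) -> ~~ vrej (cst c) ->
  b ==> vpub (cst c) -> step P w c false b = ONext c' -> reachable P c'.
Proof.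
move=> [sp [su [n E]]] ha hr hb hs.
exists sp, (fun j => if j == cnpub c then b else su j), n.+1 => /=.
rewrite (run_agree (su' := fun j => if j == cnpub c then b else su j) E); last first.
  by move=> j hj; rewrite ltn_eqF.
rewrite (negbTE ha) (negbTE hr) (negbTE (nopriv _)) /= eqxx.
by case: b hb hs => /= [->|] //; rewrite andbF.
Qed.

Lemma reachable_pub_le P c : reachable P c -> (cnpub c <= r)%N.
Proof.
move=> [sp [su [n]]]; elim: n c => [|n IH] c /=; first by move=> [<-].
case E: (run P w sp su n) => [||c0] //.
case ha: (vacc (cst c0)) => //; case hr: (vrej (cst c0)) => //.
rewrite (negbTE (nopriv _)) /= => hs.
rewrite (step_cnpub hs); case hp: (vpub (cst c0)) => /=.
- by rewrite addn1; apply: (hbound E); rewrite ?ha ?hr ?hp.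
- by rewrite addn0; apply: IH E.
Qed.

Lemma granular_move P n c (b : bool) :
  (forall c', reachable P c' ->
     exists k : nat, within P w 1 0 n c' * 2 ^ r = INR k * 2 ^ (cnpub c')) ->
  reachable P c -> ~~ vacc (cst c) -> ~~ vrej (cst c) -> b ==> vpub (cst c) ->
  exists k : nat, outcome_value P w 1 0 n (step P w c false b) * 2 ^ r =
                  INR k * 2 ^ (cnpub c + vpub (cst c)).
Proof.
move=> IH hR ha hr hb.
case E: (step P w c false b) => [||c'] /=.
- have hle : (cnpub c + vpub (cst c) <= r)%N.
    case hp: (vpub (cst c)); last by rewrite addn0; apply: reachable_pub_le hR.
    by rewrite addn1; case: hR => [sp [su [n' E']]]; apply: (hbound E'); rewrite ?hp.
  exists (2 ^ (r - (cnpub c + vpub (cst c))))%N.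
  by rewrite INR_expn2 -pow_add plusE subnK // Rmult_1_l.
- by exists 0%N; rewrite /= !Rmult_0_l.
- by rewrite -(step_cnpub E); apply: IH; apply: reachable_step E.
Qed.

Lemma within_granular P n : forall c, reachable P c ->
  exists k : nat, within P w 1 0 n c * 2 ^ r = INR k * 2 ^ (cnpub c).
Proof.
elim: n => [|n IH] c hR; first by exists 0%N; rewrite /= !Rmult_0_l.
rewrite within_public.
case ha: (vacc (cst c)).
  exists (2 ^ (r - cnpub c))%N.
  by rewrite INR_expn2 -pow_add plusE subnK ?Rmult_1_l //; apply: reachable_pub_le hR.
case hr: (vrej (cst c)); first by exists 0%N; rewrite /= !Rmult_0_l.
have [k0 e0] := granular_move IH hR (negbT ha) (negbT hr) (isT : false ==> _).
case hp: (vpub (cst c)); last by exists k0; rewrite hp addn0 in e0.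
have hb1 : true ==> vpub (cst c) by rewrite hp.
have [k1 e1] := granular_move IH hR (negbT ha) (negbT hr) hb1.
exists (k1 + k0)%N; rewrite hp addn1 /= in e1 e0; rewrite plus_INR.
set g1 := outcome_value _ _ _ _ _ _ in e1 *; set g0 := outcome_value _ _ _ _ _ _ in e0 *.
set t := 2 ^ cnpub c in e1 e0 *; set R2 := 2 ^ r in e1 e0 *.
nra.
Qed.

Lemma within_level P n c : reachable P c -> exists m : level r, level_prob r m = within P w 1 0 n c.
Proof.
move=> /(within_granular n) [k e].
apply: (level_prob_onto (n := k * 2 ^ cnpub c)); first exact: within_le1.
by rewrite e mult_INR INR_expn2.
Qed.

Lemma outcome_level P n c b : reachable P c -> ~~ vacc (cst c) -> ~~ vrej (cst c) ->
  b ==> vpub (cst c) ->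
  exists mb : level r, level_prob r mb = outcome_value P w 1 0 n (step P w c false b).
Proof.
move=> hR ha hr hb.
have [k e] := granular_move (within_granular n) hR ha hr hb.
apply: (level_prob_onto (n := k * 2 ^ (cnpub c + vpub (cst c)))); first exact: outcome_value_le1.
by rewrite e mult_INR INR_expn2.
Qed.

Lemma achieved_move_wins P n c :
  (forall c', reachable P c' ->
     forall m : level r, level_prob r m <= within P w 1 0 n c' ->
     wins w (surface c') (cipos c') m) ->
  reachable P c -> ~~ vacc (cst c) -> ~~ vrej (cst c) -> forall b : bool, b ==> vpub (cst c) ->
  forall mb : level r, level_prob r mb <= outcome_value P w 1 0 n (step P w c false b) ->
  move_wins (tape_sym w) (move_in w) (wins w) (surface c) (cipos c) (P w (trans_next c b)) b mb.
Proof.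
move=> IH hR ha hr b hb mb.
case E: (step P w c false b) => [||c'] hm.
- by right; left; apply: (step_acc_inv E).
- by left; apply/(level_prob_eq0 r); have := level_prob_ge0 r mb; simpl in hm; lra.
- have [k' [d [i' [hl hmv ec]]]] := step_next_inv E.
  right; right; exists k', d, i'; split=> //; split=> //.
  by have := IH c' (reachable_step hR ha hr hb E) mb hm; rewrite ec surface_mkconfig.
Qed.

Lemma achieved_wins P n : forall c, reachable P c ->
  forall m : level r, level_prob r m <= within P w 1 0 n c -> wins w (surface c) (cipos c) m.
Proof.
elim: n => [|n IH] c hR m hm.
  by apply: win_level0; apply/(level_prob_eq0 r); have := level_prob_ge0 r m; simpl in hm; lra.
move: hm; rewrite within_public.
case ha: (vacc (cst c)) => /= hm.
  by apply: win_fold; constructor 3; split=> //; left; rewrite /sstate /surface /= ha.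
case hr: (vrej (cst c)) hm => /= hm.
  by apply: win_level0; apply/(level_prob_eq0 r); have := level_prob_ge0 r m; lra.
apply: win_fold; constructor 3; split=> //; right; split; first by rewrite /sstate /surface /= hr.
have mv_wins := achieved_move_wins IH hR (negbT ha) (negbT hr).
rewrite /turn_wins /sstate /surface /=; case hp: (vpub (cst c)) hm => /= hm.
- have hb1 : true ==> vpub (cst c) by rewrite hp.
  have [m0 e0] := outcome_level n hR (negbT ha) (negbT hr) (isT : false ==> _).
  have [m1 e1] := outcome_level n hR (negbT ha) (negbT hr) hb1.
  exists (P w (trans_next c false)), (P w (trans_next c true)), m0, m1; split.
    by apply/(level_prob_le_avg r); rewrite e0 e1; lra.
  split; [apply: (mv_wins false isT m0) | apply: (mv_wins true hb1 m1)].
  + by rewrite e0; apply: Rle_refl.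
  + by rewrite e1; apply: Rle_refl.
- by exists (P w (trans_next c false)); apply: (mv_wins false isT m hm).
Qed.

Lemma accept_within_wins P n :
  exists m : level r, level_prob r m = accept_within P w n /\ wins w (surface (init_config V)) 0 m.
Proof.
have hR : reachable P (init_config V) by exists (fun _ => false), (fun _ => false), 0%N.
have [m e] := within_level n hR.
by exists m; split=> //; apply: (achieved_wins (n := n) hR); rewrite e; apply: Rle_refl.
Qed.

End Prover.

Section Verification.
Variables (Sigma : finType) (V : verifier Sigma) (r : nat) (eps : R) (L : seq Sigma -> Prop).
Hypotheses (nopriv : no_private_coins V) (hbound : public_coins_bounded V r) (he : eps < 1 / 2)
  (hv : verifies V L eps).

Lemma mem_iff_wins w :
  L w <-> exists m : level r, eps < level_prob r m /\ wins w (surface (init_config V)) 0 m.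
Proof.
have [[P0 complete] sound] := hv.
split=> [Lw|[m [lt_eps /(wins_accept_within nopriv) [P [n le_m]]]]].
- have [n hn] := complete w Lw ((1 - 2 * eps) / 2) ltac:(lra).
  have [m [e hw]] := accept_within_wins w nopriv hbound P0 n.
  by exists m; split=> //; rewrite e; lra.
- apply: NNPP => nLw.
  have [n' hn'] := sound P w nLw ((level_prob r m - eps) / 2) ltac:(lra).
  have := within_acc_rej_le1 P w n n' (init_config V).
  rewrite /accept_within /reject_within in le_m hn'.
  lra.
Qed.

End Verification.

Theorem theorem2 (Sigma : finType) (L : seq Sigma -> Prop) :
  regular L <->
  exists (V : verifier Sigma) (r : nat) (eps : R),
    no_private_coins V /\ public_coins_bounded V r /\
    eps < 1 / 2 /\ verifies V L eps.
Proof.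
split; first exact: regular_verifiable.
move=> [V [r [eps [nopriv [hbound [he hv]]]]]].
apply: (myhill_nerode_regular (f := summary V r)) => u v e z.
have [h1 h0] := summary_wins_left e.
rewrite !(mem_iff_wins nopriv hbound he hv).
by split=> -[m [hm hw]]; exists m; split=> //; apply/(wins_start_congr h1 h0).
Qed.
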